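(* Under the standing assumption, no two distinct small tiles touch, i.e. any two distinct small tiles are disjoint.
   Context: Standing assumption: let $n\ge 2$ and $0<p<q$ be real numbers. A tiling of $\mathbb{R}^n$ is a family of closed sets (tiles) whose union is $\mathbb{R}^n$ and whose pairwise intersections have Lebesgue measure zero. There are an invertible real $n\times n$ matrix $B$, an axis-parallel closed cube $S_0$ of side length $p$ and an axis-parallel closed cube $T_0$ of side length $q$ such that the family $\{S_0+Bz: z\in\mathbb{Z}^n\}\cup\{T_0+Bz: z\in\mathbb{Z}^n\}$ is a tiling of $\mathbb{R}^n$, and this tiling is unilateral, i.e. no two distinct tiles of the same side length share a full facet. Tiles of side length $p$ are called small, tiles of side length $q$ big. Two tiles touch if they intersect; they properly touch if their intersection has positive $(n-1)$-dimensional Lebesgue measure. *)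

From HB Require Import structures.
From mathcomp Require Import all_boot all_order all_algebra.
From mathcomp Require Import boolp classical_sets reals.
Set Implicit Arguments. Unset Strict Implicit. Unset Printing Implicit Defensive.
Import Order.TTheory GRing.Theory Num.Theory.
Local Open Scope ring_scope.
Local Open Scope classical_set_scope.

(* Points of R^n are column vectors 'cV[R]_n; coordinate i of x is x i 0. *)

Definition cube (R : realType) (n : nat) (c : 'cV[R]_n) (s : R) : set 'cV[R]_n :=
  [set x | forall i : 'I_n, c i 0 <= x i 0 <= c i 0 + s].

Definition box (R : realType) (n : nat) (l u : 'cV[R]_n) : set 'cV[R]_n :=
  [set x | forall i : 'I_n, l i 0 <= x i 0 <= u i 0].

Definition box_vol (R : realType) (n : nat) (l u : 'cV[R]_n) : R :=
  \prod_(i < n) (u i 0 - l i 0).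

Definition null_set (R : realType) (n : nat) (A : set 'cV[R]_n) : Prop :=
  forall e : R, 0 < e ->
    exists (l u : nat -> 'cV[R]_n),
      (forall k i, l k i 0 <= u k i 0) /\
      (A `<=` \bigcup_k box (l k) (u k)) /\
      (forall N : nat, \sum_(k < N) box_vol (l k) (u k) < e).

Definition is_tiling (R : realType) (n : nat) (I : Type) (tile : I -> set 'cV[R]_n) :=
  (forall x : 'cV[R]_n, exists i, tile i x) /\
  (forall i j, tile i <> tile j -> null_set (tile i `&` tile j)).

Definition facet (R : realType) (n : nat) (c : 'cV[R]_n) (s : R) (k : 'I_n) (b : bool)
  : set 'cV[R]_n :=
  [set x | cube c s x /\ x k 0 = c k 0 + (if b then s else 0)].

Definition share_facet (R : realType) (n : nat) (c1 c2 : 'cV[R]_n) (s : R) : Prop :=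
  exists k1 b1 k2 b2, facet c1 s k1 b1 = facet c2 s k2 b2.

Definition latt (R : realType) (n : nat) (B : 'M[R]_n) (z : 'cV[int]_n) : 'cV[R]_n :=
  B *m map_mx (fun m : int => m%:~R) z.

(* The two-cube lattice family: index (false, z) is the small tile S0 + Bz,
   (true, z) the big tile T0 + Bz; cS, cT are the lower corners of S0, T0. *)
Definition tcorner (R : realType) (n : nat) (B : 'M[R]_n) (cS cT : 'cV[R]_n)
  (t : bool * 'cV[int]_n) : 'cV[R]_n :=
  (if t.1 then cT else cS) + latt B t.2.

Definition tside (R : realType) (n : nat) (p q : R) (t : bool * 'cV[int]_n) : R :=
  if t.1 then q else p.

Definition ttile (R : realType) (n : nat) (B : 'M[R]_n) (cS cT : 'cV[R]_n) (p q : R)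
  (t : bool * 'cV[int]_n) : set 'cV[R]_n :=
  cube (tcorner B cS cT t) (@tside _ n p q t).

Definition unilateral (R : realType) (n : nat) (B : 'M[R]_n) (cS cT : 'cV[R]_n) (p q : R) :=
  forall t1 t2 : bool * 'cV[int]_n,
    ttile B cS cT p q t1 <> ttile B cS cT p q t2 ->
    @tside _ n p q t1 = @tside _ n p q t2 ->
    ~ share_facet (tcorner B cS cT t1) (tcorner B cS cT t2) (@tside _ n p q t1).

(* If the small tiles [S0 + Bz1] and [S0 + Bz2] meet, the vector [B(z1 - z2)]
   has all coordinates in [[-p, p]].  The big tiles [T0 + Bz1] and [T0 + Bz2]
   differ by the same vector, and since [q > p] they overlap in a box whose
   sides are at least [q - p > 0].  A box with positive sides is not a null
   set (its volume bounds the total volume of any countable cover), which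
   contradicts the tiling property. *)
From HB Require Import structures.
From mathcomp Require Import all_boot all_order all_algebra.
From mathcomp Require Import all_classical all_reals all_analysis.
From mathcomp Require Import measurable_realfun lebesgue_measure lebesgue_integral.
From mathcomp Require Import lra.

Set Implicit Arguments.
Unset Strict Implicit.
Unset Printing Implicit Defensive.
Import Order.TTheory GRing.Theory Num.Theory.
Local Open Scope ring_scope.
Local Open Scope classical_set_scope.

Section CoverVolume.
Variable R : realType.

Lemma in_set_itvcc (t l u : R) : (t \in (`[l, u] : set R)) = (l <= t <= u).
Proof.
apply/idP/idP => [/set_mem /=|h]; first by rewrite in_itv.
by apply/mem_set; rewrite /= in_itv.
Qed.

(* Integrate the pointwise bound over [[a, b]] and exchange sum and integral. *)
Lemma length_le_cover_sum (a b V : R) (c l u : nat -> R) :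
  (forall k, 0 <= c k) -> a <= b -> (forall k, l k <= u k) -> 0 <= V ->
  (forall t, a <= t <= b ->
     (V%:E <= \sum_(k <oo) (c k * \1_(`[l k, u k]) t)%:E)%E) ->
  ((V * (b - a))%:E <= \sum_(k <oo) (c k * (u k - l k))%:E)%E.
Proof.
move=> c0 ab lu V0 cover.
pose mu := @lebesgue_measure R.
pose D : set R := `[a, b].
have mD : measurable D by exact: measurable_itv.
pose f k (t : R) := (c k * \1_(`[l k, u k]) t)%:E.
have f0 k t : (0 <= f k t)%E.
  by rewrite lee_fin mulr_ge0 // indicE; case: (t \in _).
have mf : forall k, measurable_fun D (f k).
  by move=> k; apply/measurable_EFinP; apply: measurable_funM.
have -> : ((V * (b - a))%:E = \int[mu]_(t in D) (cst V%:E) t)%E.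
  rewrite integral_cst // /mu /D.
  move: (@lebesgue_measure_itv R `[a, b]%R) => /= ->; rewrite lte_fin.
  case: ltP => [_|ba]; first by rewrite -EFinD -EFinM.
  have -> : b = a by apply/eqP; rewrite eq_le ab ba.
  by rewrite subrr mulr0 mule0.
apply: (@le_trans _ _ (\int[mu]_(t in D) \sum_(k <oo) f k t)%E).
  have mS : measurable_fun D (fun t => \sum_(k <oo) f k t)%E.
    exact: ge0_emeasurable_sum (fun k x _ _ => f0 k x) (fun k _ => mf k).
  apply: (ge0_le_integral mu mD _ (measurable_cst _) mS).
  - by move=> t _; rewrite lee_fin.
  - by move=> t; rewrite /D /= in_itv /=; exact: cover.
rewrite integral_nneseries //; apply: lee_nneseries => //.
  by move=> k _ _; apply: integral_ge0.
move=> k _; rewrite /f.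
rewrite (@integralZl_indic _ _ _ mu D mD (fun _ => `[l k, u k]%classic) (c k)) //; last first.
  by move=> ck; have := c0 k; rewrite leNgt ck.
rewrite integral_indic // EFinM; apply: lee_wpmul2l; first by rewrite lee_fin.
have mI := @measureIl _ _ R mu `[l k, u k]%classic D (measurable_itv _) mD.
apply: (le_trans mI).
move: (@lebesgue_measure_itv R `[l k, u k]%R) => /= ->; rewrite lte_fin.
by case: ltP => [_|_]; rewrite ?lee_fin ?subr_ge0 // -EFinD.
Qed.

(* Boxes are indexed by [nat] in the dimension so that the induction on [d]
   needs no casts; the weights [w] select the boxes of the cover that meet the
   current slice. *)
Lemma box_volume_le_cover (d : nat) (a b : nat -> R) (l u : nat -> nat -> R)
    (w : nat -> bool) :
  (forall i, (i < d)%N -> a i <= b i) ->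
  (forall k i, (i < d)%N -> l k i <= u k i) ->
  (forall x : nat -> R, (forall i, (i < d)%N -> a i <= x i <= b i) ->
     exists k, w k /\ forall i, (i < d)%N -> l k i <= x i <= u k i) ->
  ((\prod_(i < d) (b i - a i))%:E <=
     \sum_(k <oo) ((w k)%:R * \prod_(i < d) (u k i - l k i))%:E)%E.
Proof.
elim: d a b l u w => [|d IH] a b l u w ab lu cov.
  have [k [wk _]] := cov (fun=> 0) (fun i (hi : (i < 0)%N) => False_ind _ (notF hi)).
  have term_ge0 j : (0 <= ((w j)%:R * \prod_(i < 0) (u j i - l j i))%:E)%E.
    by rewrite big_ord0 lee_fin mulr1 ler0n.
  apply: (le_trans _ (nneseries_lim_ge k.+1 _)); last by move=> j _ _; exact: term_ge0.
  rewrite big_nat_recr //= wk !big_ord0 mulr1.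
  by apply: leeDr; apply: sume_ge0 => j _.
have ltdS i : (i < d)%N -> (i < d.+1)%N by move=> /leq_trans; apply.
rewrite big_ord_recr /=.
under eq_eseriesr do rewrite big_ord_recr /= mulrA.
apply: length_le_cover_sum.
- by move=> k; rewrite mulr_ge0 ?ler0n // prodr_ge0 // => i _; rewrite subr_ge0 lu ?ltdS.
- exact: ab.
- by move=> k; exact: lu.
- by rewrite prodr_ge0 // => i _; rewrite subr_ge0 ab ?ltdS.
move=> t /andP[ta tb].
pose slice k := w k && (l k d <= t <= u k d).
have -> : (\sum_(k <oo) ((w k)%:R * \prod_(i < d) (u k i - l k i)
             * \1_(`[l k d, u k d]) t)%:E
    = \sum_(k <oo) ((slice k)%:R * \prod_(i < d) (u k i - l k i))%:E)%E.
  apply: eq_eseriesr => k _; rewrite indicE in_set_itvcc /slice.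
  by case: (w k); case: (_ <= t <= _); rewrite /= ?mul0r ?mulr0 ?mulr1 ?mul1r.
apply: IH => [i /ltdS|k i /ltdS|x hx]; [exact: ab|exact: lu|].
pose xt i := if i == d then t else x i.
have [|k [wk hk]] := cov xt.
  move=> i; rewrite ltnS leq_eqVlt => /orP[/eqP->|id].
    by rewrite /xt eqxx ta tb.
  by rewrite /xt (ltn_eqF id); exact: hx.
exists k; split.
  by rewrite /slice wk /=; have := hk d (ltnSn d); rewrite /xt eqxx.
by move=> i id; have := hk i (ltdS i id); rewrite /xt (ltn_eqF id).
Qed.

Lemma nneseries_le_of_partial_sums (F : nat -> R) (e : R) :
  (forall k, 0 <= F k) -> (forall N, \sum_(k < N) F k < e) ->
  (\sum_(k <oo) (F k)%:E <= e%:E)%E.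
Proof.
move=> F0 partial; apply: lime_le.
  by apply: is_cvg_nneseries => k _ _; rewrite lee_fin.
by apply: nearW => N; rewrite sumEFin lee_fin big_mkord; exact/ltW.
Qed.

End CoverVolume.

Section NullSets.
Variables (R : realType) (n : nat).
Implicit Types (A C : set 'cV[R]_n) (l u : 'cV[R]_n).

Lemma null_setS A C : A `<=` C -> null_set C -> null_set A.
Proof.
move=> AC nullC e e0; have [l [u [lu [cov small]]]] := nullC e e0.
by exists l, u; split => //; split => //; apply: subset_trans cov.
Qed.

Lemma box_not_null l u : (forall i, l i 0 < u i 0) -> ~ null_set (box l u).
Proof.
move=> lu nullB.
have V0 : 0 < box_vol l u by apply: prodr_gt0 => i _; rewrite subr_gt0.
have [lk [uk [luk [cov small]]]] := nullB (box_vol l u / 2) ltac:(lra).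
pose at_ (c : 'cV[R]_n) (j : nat) := oapp (fun i : 'I_n => c i 0) 0 (insub j).
have at_val c (i : 'I_n) : at_ c i = c i 0 by rewrite /at_ valK.
have at_ord c j (hj : (j < n)%N) : at_ c j = c (Ordinal hj) 0 by rewrite /at_ insubT.
have vol_at c c' : \prod_(i < n) (at_ c' i - at_ c i) = box_vol c c'.
  by apply: eq_bigr => i _; rewrite !at_val.
have vol_le : ((box_vol l u)%:E <= \sum_(k <oo) (box_vol (lk k) (uk k))%:E)%E.
  have := @box_volume_le_cover R n (at_ l) (at_ u) (fun k => at_ (lk k))
    (fun k => at_ (uk k)) xpredT.
  under eq_eseriesr do rewrite mul1r vol_at.
  rewrite vol_at; apply.
  - by move=> j hj; rewrite !at_ord ltW.
  - by move=> k j hj; rewrite !at_ord.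
  move=> x hx.
  have /cov[k _ hk] : box l u (\col_(i < n) x i).
    by move=> i; rewrite mxE -!at_val; exact: hx.
  by exists k; split => // j hj; move: (hk (Ordinal hj)); rewrite mxE !at_ord.
have vol_ge0 k : 0 <= box_vol (lk k) (uk k).
  by rewrite prodr_ge0 // => i _; rewrite subr_ge0.
have := le_trans vol_le (nneseries_le_of_partial_sums vol_ge0 small).
by rewrite lee_fin; lra.
Qed.

Lemma cube_inj (c1 c2 : 'cV[R]_n) (s : R) :
  0 <= s -> cube c1 s = cube c2 s -> c1 = c2.
Proof.
move=> s0 E.
have h1 : cube c2 s c1 by rewrite -E => i; rewrite lexx /= lerDl.
have h2 : cube c1 s c2 by rewrite E => i; rewrite lexx /= lerDl.
apply/matrixP => i j; rewrite (ord1 j) /=.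
by move: (h1 i) (h2 i) => /andP[? _] /andP[? _]; apply/eqP; rewrite eq_le; apply/andP.
Qed.

(* The overlap of the big cubes contains the box between [b + max v1 v2]
   and [b + min v1 v2 + q], whose sides are at least [q - p]. *)
Lemma translated_cubes_overlap (a b v1 v2 : 'cV[R]_n) (p q : R) :
  p < q -> cube (a + v1) p `&` cube (a + v2) p !=set0 ->
  ~ null_set (cube (b + v1) q `&` cube (b + v2) q).
Proof.
move=> pq [y [y1 y2]] null_big.
have close i : v1 i 0 - v2 i 0 <= p /\ v2 i 0 - v1 i 0 <= p.
  by move: (y1 i) (y2 i); rewrite !mxE => /andP[? ?] /andP[? ?]; split; lra.
pose lo := \col_i (b i 0 + if v1 i 0 <= v2 i 0 then v2 i 0 else v1 i 0).
pose hi := \col_i (b i 0 + q + if v1 i 0 <= v2 i 0 then v1 i 0 else v2 i 0).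
apply: (@box_not_null lo hi).
  by move=> i; have [? ?] := close i; rewrite !mxE; case: (leP (v1 i 0) (v2 i 0)); lra.
apply: null_setS null_big => x hx.
by split=> i; move: (hx i) (close i); rewrite !mxE;
  case: (leP (v1 i 0) (v2 i 0)) => ? /andP[? ?] [? ?]; apply/andP; split; lra.
Qed.

End NullSets.

Theorem lemma3 (R : realType) (n : nat) (p q : R) (B : 'M[R]_n) (cS cT : 'cV[R]_n) :
  (2 <= n)%N -> 0 < p -> p < q -> B \in unitmx ->
  is_tiling (ttile B cS cT p q) ->
  unilateral B cS cT p q ->
  forall z1 z2 : 'cV[int]_n,
    cube (cS + latt B z1) p <> cube (cS + latt B z2) p ->
    cube (cS + latt B z1) p `&` cube (cS + latt B z2) p = set0.
Proof.
move=> _ p0 pq _ [_ null_overlap] _ z1 z2 small_neq.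
rewrite -subset0 => y meet_y.
have big_neq : ttile B cS cT p q (true, z1) <> ttile B cS cT p q (true, z2).
  move=> /(cube_inj (ltW (lt_trans p0 pq))) /addrI eqL.
  by apply: small_neq; rewrite eqL.
exact: (translated_cubes_overlap (b := cT) pq (ex_intro _ y meet_y))
  (null_overlap _ _ big_neq).
Qed.
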